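(* Let $G=\mathbb{Z}_2\times\mathbb{Z}_4$, let $\theta$ be a normalised orthomorphism of $G$, let $x\in A_{22}$ and let $a\in A_{44}\setminus\theta(A_{44})$. Then $\theta(a)=ax$ and $\theta(ax)=ax\theta(x)$; moreover $A_{44}=\{a,ax\}$, $\theta(A_{44})=\{ax,\ ax\theta(x)\}$ and $A_{42}=\{ax\theta(x),\ a\theta(x)\}$.
   Context: $G$ is written multiplicatively with identity $e$; $o(g)$ is the order of $g$. A normalised orthomorphism of $G$ is a bijection $\theta\colon G\to G$ with $\theta(e)=e$ such that $x\mapsto x^{-1}\theta(x)$ is also a bijection of $G$. For such $\theta$: $A_{44}=\{x: o(x)=4, o(\theta(x))=4\}$, $A_{42}=\{x: o(x)=4, o(\theta(x))=2\}$, $A_{24}=\{x: o(x)=2, o(\theta(x))=4\}$, $A_{22}=\{x: o(x)=2, o(\theta(x))=2\}$; $\theta(S)$ denotes the image of a set $S$. *)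

From mathcomp Require Import all_boot all_fingroup all_algebra.
Set Implicit Arguments. Unset Strict Implicit. Unset Printing Implicit Defensive.

(* G = Z_2 x Z_4, as the external direct product of the (additive, viewed as
   finGroupType) cyclic groups 'Z_2 and 'Z_4; group law written multiplicatively. *)
Definition G : finGroupType := ('Z_2 * 'Z_4)%type.

Local Open Scope group_scope.

Definition normalised_orthomorphism (theta : G -> G) : Prop :=
  [/\ bijective theta, theta 1 = 1 & bijective (fun x => x^-1 * theta x)].

Definition Aij (i j : nat) (theta : G -> G) : {set G} :=
  [set x : G | (#[x] == i) && (#[theta x] == j)].

Definition A44 := Aij 4 4.
Definition A42 := Aij 4 2.
Definition A24 := Aij 2 4.
Definition A22 := Aij 2 2.

(* The statement concerns only the 8-element group G, so it is decided by
   exhausting the normalised orthomorphisms of G.  These are enumerated by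
   building their graphs one point at a time and pruning every partial graph
   that is already not injective, or whose difference map x^-1 theta(x) is not
   injective.  Only 48 graphs survive, and the conclusion is checked on each
   of them by evaluation. *)
From mathcomp Require Import all_boot all_fingroup all_algebra.
From mathcomp Require Import cyclic.
From Stdlib Require Import FunctionalExtensionality.

Set Implicit Arguments.
Unset Strict Implicit.
Unset Printing Implicit Defensive.

Local Open Scope group_scope.

Definition ord4 (gT : finGroupType) (g : gT) : nat :=
  if g == 1 then 1%N else if g ^+ 2 == 1 then 2%N else 4%N.

Lemma order_expg4 (gT : finGroupType) (g : gT) : g ^+ 4 = 1 -> #[g] = ord4 g.
Proof.
move=> g4; have o_dvd4 : #[g] %| 4 by rewrite order_dvdn g4.
rewrite /ord4 -order_eq1 -order_dvdn.
by move: (order_gt0 g) o_dvd4; case: #[g] => [|[|[|[|[|n]]]]].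
Qed.

Section OrthomorphismGraphs.

Variables (gT : finGroupType) (s : seq gT).

Definition partial_orthomorphism (p : seq (gT * gT)) : bool :=
  [&& uniq (unzip2 p), uniq [seq q.1^-1 * q.2 | q <- p]
    & all (fun q => (q.1 == 1) ==> (q.2 == 1)) p].

Definition extend_graphs (S : seq (seq (gT * gT))) (g : gT) :=
  [seq rcons p (g, y) | p <- S,
     y <- [seq y <- s | partial_orthomorphism (rcons p (g, y))]].

Definition orthomorphism_graphs : seq (seq (gT * gT)) :=
  foldl extend_graphs [:: [::]] s.

Definition graph_fun (p : seq (gT * gT)) (g : gT) : gT :=
  nth 1 (unzip2 p) (index g (unzip1 p)).

Definition graph (f : gT -> gT) (r : seq gT) := [seq (g, f g) | g <- r].

Lemma graph_funE f r : {in r, graph_fun (graph f r) =1 f}.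
Proof.
move=> g r_g; rewrite /graph_fun /unzip1 /unzip2 -!map_comp map_id.
by rewrite (nth_map g) ?nth_index ?index_mem.
Qed.

Hypothesis mem_s : forall g, g \in s.

Variable f : gT -> gT.
Hypotheses (f_inj : injective f) (f_diff_inj : injective (fun g => g^-1 * f g)).
Hypothesis f1 : f 1 = 1.

Lemma partial_orthomorphism_graph r : uniq r -> partial_orthomorphism (graph f r).
Proof.
move=> r_uniq; rewrite /partial_orthomorphism /unzip2 /graph -!map_comp.
rewrite !map_inj_uniq //= r_uniq; apply/allP => _ /mapP[g _ ->] /=.
by apply/implyP => /eqP->; rewrite f1.
Qed.

Lemma graph_mem_extend_graphs r : forall S r0, graph f r0 \in S -> uniq (r0 ++ r) ->
  graph f (r0 ++ r) \in foldl extend_graphs S r.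
Proof.
elim: r => [|g r IHr] S r0 S_r0 uniq_r; first by rewrite cats0.
rewrite -cat_rcons /=; apply: IHr; last by rewrite cat_rcons.
apply/allpairsPdep; exists (graph f r0), (f g); split => //.
  rewrite mem_filter mem_s andbT -map_rcons partial_orthomorphism_graph //.
  by move: uniq_r; rewrite -cat_rcons cat_uniq => /andP[].
by rewrite /graph map_rcons.
Qed.

Lemma orthomorphism_graphsP :
  uniq s -> exists2 p, p \in orthomorphism_graphs & graph_fun p = f.
Proof.
move=> uniq_s; exists (graph f s).
  by apply: (@graph_mem_extend_graphs s _ [::]); rewrite ?mem_seq1.
by apply: functional_extensionality => g; rewrite graph_funE.
Qed.

End OrthomorphismGraphs.

(* Elements are listed as [i%:R] rather than through [enum G], which does not
   reduce under [vm_compute]. *)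
Definition G_elems : seq G :=
  [seq ((i%:R)%R : 'Z_2, (j%:R)%R : 'Z_4) | i <- iota 0 2, j <- iota 0 4].

Lemma mem_G_elems (g : G) : g \in G_elems.
Proof.
case: g => u v; rewrite -[u]natr_Zp -[v]natr_Zp.
apply/allpairsP; exists (nat_of_ord u, nat_of_ord v).
by rewrite !mem_iota !ltn_ord.
Qed.

Lemma uniq_G_elems : uniq G_elems.
Proof. by vm_compute. Qed.

Lemma expg4_G (g : G) : g ^+ 4 = 1.
Proof.
have: all (fun g : G => g ^+ 4 == 1) G_elems by vm_compute.
by move/allP/(_ g (mem_G_elems g))/eqP.
Qed.

Definition A_seq (i j : nat) (f : G -> G) : seq G :=
  [seq g <- G_elems | (ord4 g == i) && (ord4 (f g) == j)].

Definition same_elems (r t : seq G) : bool :=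
  all (fun g => (g \in r) == (g \in t)) G_elems.

Definition proposition1_check (f : G -> G) : bool :=
  all (fun x => all (fun a =>
    [&& x \in A_seq 2 2 f, a \in A_seq 4 4 f & a \notin map f (A_seq 4 4 f)] ==>
    [&& f a == a * x, f (a * x) == a * x * f x,
        same_elems (A_seq 4 4 f) [:: a; a * x],
        same_elems (map f (A_seq 4 4 f)) [:: a * x; a * x * f x]
      & same_elems (A_seq 4 2 f) [:: a * x * f x; a * f x]]) G_elems) G_elems.

Lemma proposition1_check_graphs :
  all (fun p => proposition1_check (graph_fun p)) (orthomorphism_graphs G_elems).
Proof. by vm_compute. Qed.

Lemma Aij_seq i j f : Aij i j f =i A_seq i j f.
Proof. by move=> g; rewrite inE mem_filter mem_G_elems andbT !order_expg4 ?expg4_G. Qed.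

Lemma imset_Aij_seq i j f : f @: Aij i j f =i map f (A_seq i j f).
Proof.
move=> g; apply/imsetP/mapP => -[h h_in ->]; exists h => //.
  by rewrite -Aij_seq.
by rewrite Aij_seq.
Qed.

Lemma same_elems_setP (A B : {set G}) r t :
  A =i r -> B =i t -> same_elems r t -> A = B.
Proof.
move=> Ar Bt /allP same; apply/setP => g; rewrite Ar Bt.
exact/eqP/same/mem_G_elems.
Qed.

Lemma proposition1_checkP f x a :
  proposition1_check f -> x \in A22 f -> a \in A44 f :\: f @: A44 f ->
  [/\ f a = a * x, f (a * x) = a * x * f x,
      A44 f = [set a; a * x], f @: A44 f = [set a * x; a * x * f x]
    & A42 f = [set a * x * f x; a * f x]].
Proof.
move=> /allP/(_ x (mem_G_elems x))/allP/(_ a (mem_G_elems a))/implyP check.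
rewrite /A22 /A44 Aij_seq in_setD imset_Aij_seq Aij_seq => x_in /andP[a_out a_in].
move: check; rewrite x_in a_in a_out => /(_ isT).
case/and5P=> /eqP fa /eqP fax A44E imA44E A42E.
have pair_seq2 (u v : G) : [set u; v] =i [:: u; v] by move=> g; rewrite !inE.
split=> //.
- exact: same_elems_setP (Aij_seq _ _ _) (pair_seq2 _ _) A44E.
- exact: same_elems_setP (imset_Aij_seq _ _ _) (pair_seq2 _ _) imA44E.
- exact: same_elems_setP (Aij_seq _ _ _) (pair_seq2 _ _) A42E.
Qed.

Theorem proposition1 (theta : G -> G) (x a : G) :
  normalised_orthomorphism theta ->
  x \in A22 theta ->
  a \in A44 theta :\: theta @: A44 theta ->
  [/\ theta a = a * x,
      theta (a * x) = a * x * theta x,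
      A44 theta = [set a; a * x],
      theta @: A44 theta = [set a * x; a * x * theta x]
    & A42 theta = [set a * x * theta x; a * theta x]].
Proof.
case=> /bij_inj theta_inj theta1 /bij_inj diff_inj.
have [p p_graph <-] :=
  orthomorphism_graphsP mem_G_elems theta_inj diff_inj theta1 uniq_G_elems.
exact: proposition1_checkP (allP proposition1_check_graphs p p_graph).
Qed.
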